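(* Let $m,t\in\mathbb N$ and $\theta\in\{0,1\}^m$. Let $\rho_{XYR}$ be a density matrix on registers $X,Y$ ($m$ qubits each) and $R$ such that $(\Pi_t^{\mathsf{EPR}}\otimes\mathds 1_R)\rho_{XYR}=\rho_{XYR}$. Let $\{\Pi_{v'}\}_{v'\in\{0,1\}^m}$ be any complete set of orthogonal projectors on $R$. Then $$\sum_{v\in\{0,1\}^m}\mathrm{Tr}\big[(H^\theta|v\rangle\langle v|_XH^\theta\otimes\mathds 1_Y\otimes\Pi_v)\rho_{XYR}\big]\le2^{-m}(m+1)^{2t},$$ i.e. when $X$ is measured in the $H^\theta$ basis (outcome $v$) and $R$ with $\{\Pi_{v'}\}$ (outcome $v'$), $\Pr[v'=v]\le2^{-m}(m+1)^{2t}$; equivalently $\mathbf H_{\min}(V\mid R)\ge m-2t\log_2(m+1)$.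
   Context: $H^\theta=H^{\theta_1}\otimes\cdots\otimes H^{\theta_m}$ with $H$ the Hadamard gate. For $a,b\in\{0,1\}^m$, $|\phi^+_{ab}\rangle=2^{-m/2}\sum_{v\in\{0,1\}^m}|v\rangle_X\otimes X^aZ^b|v\rangle_Y$ (Pauli $X^a=\bigotimes_iX^{a_i}$, $Z^b=\bigotimes_iZ^{b_i}$). $\Pi_t^{\mathsf{EPR}}=\sum_{a,b:\,w(a),w(b)\le t}|\phi^+_{ab}\rangle\langle\phi^+_{ab}|$, where $w(\cdot)$ is Hamming weight. *)

From mathcomp Require Import all_boot all_order all_algebra.
Set Implicit Arguments. Unset Strict Implicit. Unset Printing Implicit Defensive.
Import Order.TTheory GRing.Theory Num.Theory.
Local Open Scope ring_scope.

Section Quantum.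
Variable C : numClosedFieldType.

(* Linear operators on the Hilbert space C^I, I a finite index type,
   represented by their matrix entries in the computational basis. *)
Definition op (I : finType) := I -> I -> C.

Definition opmul (I : finType) (A B : op I) : op I :=
  fun i j => \sum_(k : I) A i k * B k j.
Definition optr (I : finType) (A : op I) : C := \sum_(i : I) A i i.
Definition idop (I : finType) : op I := fun i j => (i == j)%:R.
Definition kron (I J : finType) (A : op I) (B : op J) : op (I * J)%type :=
  fun ij kl => A ij.1 kl.1 * B ij.2 kl.2.
Definition adj (I : finType) (A : op I) : op I := fun i j => (A j i)^*.

Definition ketbra (I : finType) (u : I -> C) : op I := fun i j => u i * (u j)^*.
Definition basisproj (I : finType) (v : I) : op I :=
  fun i j => ((i == v) && (j == v))%:R.

Definition hermitian (I : finType) (A : op I) := forall i j, A i j = (A j i)^*.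
Definition psd (I : finType) (A : op I) :=
  hermitian A /\ forall u : I -> C, 0 <= \sum_(i : I) \sum_(j : I) (u i)^* * A i j * u j.
Definition density (I : finType) (rho : op I) := psd rho /\ optr rho = 1.
Definition projector (I : finType) (P : op I) := hermitian P /\ opmul P P = P.

Definition complete_orth_projectors (K I : finType) (P : K -> op I) :=
  [/\ forall k, projector (P k),
      forall k l, k != l -> opmul (P k) (P l) = (fun _ _ => 0)
    & forall i j, \sum_(k : K) P k i j = idop i j].

Definition bits (m : nat) := {ffun 'I_m -> bool}.
Definition hw m (a : bits m) : nat := #|[pred i | a i]|.
Definition dotb m (a b : bits m) : nat := \sum_(i < m) (a i && b i).
Definition xorb_bits m (a b : bits m) : bits m := [ffun i => xorb (a i) (b i)].

Definition hadamard (x y : bool) : C := (-1) ^+ (x && y) / sqrtC 2.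
(* H^theta = H^{theta_1} (x) ... (x) H^{theta_m} *)
Definition Htheta m (theta : bits m) : op (bits m) :=
  fun x y => \prod_(i < m) (if theta i then hadamard (x i) (y i)
                            else ((x i) == (y i))%:R).

(* |phi^+_{ab}> = 2^{-m/2} sum_v |v>_X (x) X^a Z^b |v>_Y,
   with X^a Z^b |v> = (-1)^{b.v} |v xor a>. *)
Definition epr m (a b : bits m) : (bits m * bits m)%type -> C :=
  fun xy => (sqrtC 2 ^+ m)^-1 * (-1) ^+ (dotb b xy.1)
            * (xy.2 == xorb_bits xy.1 a)%:R.

Definition PiEPR m (t : nat) : op (bits m * bits m)%type :=
  fun i j => \sum_(a : bits m | (hw a <= t)%N) \sum_(b : bits m | (hw b <= t)%N)
               ketbra (epr a b) i j.

End Quantum.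

From Pilot Require Import Defs.
From mathcomp Require Import all_boot all_order all_algebra.
From mathcomp Require Import ring.
Set Implicit Arguments. Unset Strict Implicit. Unset Printing Implicit Defensive.
Import Order.TTheory GRing.Theory Num.Theory.

(* The proof is an overlap estimate for Gram operators.  Write
   Pi = \sum_a |phi_a><phi_a| (here: the low-weight EPR vectors) and let rho on
   I (x) K satisfy (Pi (x) 1) rho = rho.  For a product vector f (x) g the
   expectation of rho only sees (Pi (x) 1)(f (x) g) = \sum_a <phi_a|f> phi_a (x) g,
   so Cauchy-Schwarz for the positive form <.|rho|.> gives
       <f(x)g|rho|f(x)g> <= (\sum_a |<phi_a|f>|^2) \sum_a <phi_a(x)g|rho|phi_a(x)g>.
   Summing over the vectors of Q_v = \sum_y |u_vy><u_vy| and of the columns of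
   the projector P_v yields Tr[(Q_v (x) P_v) rho] <= c Tr[(Pi (x) P_v) rho],
   and the right-hand sides add up to c Tr[(Pi (x) 1) rho] = c
   (guessing_probability_bound).  For the theorem, Q_v measures X in the
   H^theta basis; each low-weight EPR vector has squared overlap 2^-m with the
   vectors H^theta|v> (x) |y> (y ranging), and there are at most (m+1)^(2t)
   low-weight pairs (a, b), whence the bound 2^-m (m+1)^(2t). *)

(* A string of Hamming weight at most t is the indicator of the image of some
   map 'I_t -> {0,..,m} (value 0 meaning "no position"), so there are at most
   (m+1)^t of them. *)
Lemma card_low_weight (m t : nat) : #|[pred a : bits m | hw a <= t]| <= m.+1 ^ t.
Proof.
pose support_of (g : {ffun 'I_t -> 'I_m.+1}) : bits m :=
  [ffun i => [exists k, g k == lift ord0 i]].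
have covered : [pred a : bits m | hw a <= t] \subset support_of @: [set: {ffun _}].
  apply/subsetP => a; rewrite inE /= => wt_a.
  pose e := map (lift ord0) (enum [pred i | a i]).
  have size_e : size e <= t by rewrite size_map -cardE.
  apply/imsetP; exists [ffun k : 'I_t => nth ord0 e k]; first by rewrite inE.
  apply/ffunP => i; rewrite ffunE.
  have mem_e : (lift ord0 i \in e) = a i.
    by rewrite mem_map ?mem_enum //; exact: lift_inj.
  rewrite -mem_e; apply/idP/existsP => [e_i | [k]].
    have k_lt : index (lift ord0 i) e < t by apply: leq_trans size_e; rewrite index_mem.
    by exists (Ordinal k_lt); rewrite ffunE /= nth_index.
  rewrite ffunE => /eqP nth_k; case: (ltnP k (size e)) => k_e; first by rewrite -nth_k mem_nth.
  by move: nth_k; rewrite nth_default // => /eqP; rewrite (negbTE (neq_lift _ _)).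
apply: leq_trans (subset_leq_card covered) _.
by apply: leq_trans (leq_imset_card _ _) _; rewrite cardsT card_ffun !card_ord.
Qed.

Local Open Scope ring_scope.

Lemma sum_pairE (V : nmodType) (I J : finType) (F : (I * J)%type -> V) :
  \sum_z F z = \sum_i \sum_j F (i, j).
Proof. by rewrite pair_bigA; apply: eq_bigr => -[]. Qed.

Lemma sum_deltal (R : pzSemiRingType) (I : finType) (i0 : I) (F : I -> R) :
  \sum_i (i0 == i)%:R * F i = F i0.
Proof.
rewrite (bigD1 i0) //= eqxx mul1r big1 ?addr0 // => i /negbTE.
by rewrite eq_sym => ->; rewrite mul0r.
Qed.

Lemma sum_deltar (R : pzSemiRingType) (I : finType) (i0 : I) (F : I -> R) :
  \sum_i F i * (i == i0)%:R = F i0.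
Proof.
rewrite (bigD1 i0) //= eqxx mulr1 big1 ?addr0 // => i /negbTE ->.
by rewrite mulr0.
Qed.

Lemma exchange_big2 (V : nmodType) (I J K L : finType) (F : I -> J -> K -> L -> V) :
  \sum_i \sum_j \sum_k \sum_l F i j k l = \sum_k \sum_l \sum_i \sum_j F i j k l.
Proof.
under eq_bigr => i _ do rewrite exchange_big.
rewrite exchange_big; apply: eq_bigr => k _.
by under eq_bigr => i _ do rewrite exchange_big; rewrite exchange_big.
Qed.

Section Sesquilinear.
Variables (C : numClosedFieldType) (Z : finType).

Definition sesq (rho : op C Z) (u w : Z -> C) : C :=
  \sum_i \sum_j (u i)^* * rho i j * w j.

Definition opapp (A : op C Z) (w : Z -> C) : Z -> C :=
  fun i => \sum_k A i k * w k.

Lemma sesq_ext (rho : op C Z) (u u' : Z -> C) : u =1 u' -> sesq rho u u = sesq rho u' u'.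
Proof.
by move=> eq_u; apply: eq_bigr => i _; apply: eq_bigr => j _; rewrite !eq_u.
Qed.

Lemma sesq_comb (K : finType) (rho : op C Z) (c : K -> C) (x : K -> Z -> C) :
  let y i := \sum_a c a * x a i in
  sesq rho y y = \sum_a \sum_b (c a)^* * c b * sesq rho (x a) (x b).
Proof.
rewrite /sesq /=.
transitivity (\sum_i \sum_j \sum_a \sum_b
                 ((c a)^* * c b * ((x a i)^* * rho i j * x b j))).
  apply: eq_bigr => i _; apply: eq_bigr => j _.
  rewrite rmorph_sum big_distrl big_distrl; apply: eq_bigr => a _ /=.
  by rewrite big_distrr; apply: eq_bigr => b _; rewrite rmorphM /=; ring.
rewrite exchange_big2; apply: eq_bigr => a _; apply: eq_bigr => b _.
by rewrite mulr_sumr; apply: eq_bigr => i _; rewrite mulr_sumr.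
Qed.

(* Cauchy-Schwarz for a positive semidefinite rho, obtained from the Lagrange
   identity: the sum over a, b of <z_ab|rho|z_ab>, z_ab = c_a^* x_b - c_b^* x_a,
   is twice the gap between the two sides. *)
Lemma sesq_cauchy_schwarz (K : finType) (rho : op C Z) (c : K -> C) (x : K -> Z -> C) :
  psd rho ->
  let y i := \sum_a c a * x a i in
  sesq rho y y <= (\sum_a `|c a| ^+ 2) * \sum_a sesq rho (x a) (x a).
Proof.
move=> [_ rho_ge0] /=; rewrite sesq_comb.
set S := \sum_a _; set N := \sum_a _; set D := \sum_a _.
pose z a b i := (c a)^* * x b i - (c b)^* * x a i.
have gap_ge0 : 0 <= \sum_a \sum_b sesq rho (z a b) (z a b).
  by apply: sumr_ge0 => a _; apply: sumr_ge0 => b _; apply: rho_ge0.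
have lagrange : \sum_a \sum_b sesq rho (z a b) (z a b) = (N * D - S) + (N * D - S).
  pose c2 a b (k : bool) := if k then (c a)^* else - (c b)^*.
  pose x2 a b (k : bool) := if k then x b else x a.
  have expand a b : sesq rho (z a b) (z a b) =
      \sum_k \sum_l (c2 a b k)^* * c2 a b l * sesq rho (x2 a b k) (x2 a b l).
    rewrite -sesq_comb; apply: sesq_ext => i.
    by rewrite big_bool /= /z mulNr.
  under eq_bigr => a _ do under eq_bigr => b _ do
    rewrite expand !big_bool /= !rmorphN /= !conjCK.
  have N_D : N * D = \sum_a \sum_b c a * (c a)^* * sesq rho (x b) (x b).
    by rewrite big_distrlr; apply: eq_bigr => a _; apply: eq_bigr => b _; rewrite normCK.
  have N_D' : N * D = \sum_a \sum_b c b * (c b)^* * sesq rho (x a) (x a).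
    rewrite mulrC big_distrlr; apply: eq_bigr => a _; apply: eq_bigr => b _.
    by rewrite normCK /=; exact: mulrC.
  have S' : S = \sum_a \sum_b (c b)^* * c a * sesq rho (x b) (x a).
    by rewrite exchange_big.
  rewrite {1}N_D N_D' {1}S' /S -!sumrB -big_split /=.
  apply: eq_bigr => a _; rewrite -!sumrB -big_split /=.
  by apply: eq_bigr => b _; ring.
by move: gap_ge0; rewrite lagrange -mulr2n pmulrn_lge0 // subr_ge0.
Qed.

Lemma sesq_eq_op (rho rho' : op C Z) (u w : Z -> C) :
  rho =2 rho' -> sesq rho u w = sesq rho' u w.
Proof. by move=> eq_rho; apply: eq_bigr => i _; apply: eq_bigr => j _; rewrite eq_rho. Qed.

Lemma sesq_applyl (rho A : op C Z) (u w : Z -> C) :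
  Defs.hermitian A -> sesq rho (opapp A u) w = sesq (opmul A rho) u w.
Proof.
move=> herm_A; rewrite /sesq /opapp /opmul.
transitivity (\sum_i \sum_j \sum_k (u k)^* * (A k i * rho i j) * w j).
  apply: eq_bigr => i _; apply: eq_bigr => j _.
  rewrite rmorph_sum !big_distrl; apply: eq_bigr => k _ /=.
  by rewrite rmorphM /= (herm_A i k) conjCK; ring.
rewrite exchange_big; under eq_bigr => j _ do rewrite exchange_big.
rewrite exchange_big; apply: eq_bigr => k _; apply: eq_bigr => j _.
by rewrite mulr_sumr big_distrl.
Qed.

Lemma sesq_applyr (rho A : op C Z) (u w : Z -> C) :
  sesq rho u (opapp A w) = sesq (opmul rho A) u w.
Proof.
rewrite /sesq /opapp /opmul; apply: eq_bigr => i _.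
transitivity (\sum_j \sum_k (u i)^* * (rho i j * A j k) * w k).
  by apply: eq_bigr => j _; rewrite big_distrr /=; apply: eq_bigr => k _; ring.
rewrite exchange_big; apply: eq_bigr => k _.
by rewrite mulr_sumr big_distrl /=; apply: eq_bigr => j _; ring.
Qed.

Lemma fixed_mulr (rho A : op C Z) :
  Defs.hermitian rho -> Defs.hermitian A -> opmul A rho = rho -> opmul rho A =2 rho.
Proof.
move=> herm_rho herm_A fixed i j.
rewrite herm_rho -{2}fixed /opmul rmorph_sum; apply: eq_bigr => k _.
by rewrite rmorphM /= -herm_rho -herm_A mulrC.
Qed.

Lemma sesq_fixed (rho A : op C Z) (u : Z -> C) :
  Defs.hermitian rho -> Defs.hermitian A -> opmul A rho = rho ->
  sesq rho u u = sesq rho (opapp A u) (opapp A u).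
Proof.
move=> herm_rho herm_A fixed.
rewrite sesq_applyl // sesq_applyr fixed.
by apply: sesq_eq_op => i j; rewrite fixed_mulr.
Qed.

End Sesquilinear.

Section GramOperators.
Variable C : numClosedFieldType.

Definition gram (Y I : finType) (u : Y -> I -> C) : op C I :=
  fun i j => \sum_y u y i * (u y j)^*.

Definition tensor (I K : finType) (f : I -> C) (g : K -> C) : (I * K)%type -> C :=
  fun z => f z.1 * g z.2.

Definition inner (I : finType) (f g : I -> C) : C := \sum_i (f i)^* * g i.

Lemma gram_hermitian (Y I : finType) (Q : op C I) (u : Y -> I -> C) :
  Q =2 gram u -> Defs.hermitian Q.
Proof.
move=> eqQ i j; rewrite !eqQ rmorph_sum; apply: eq_bigr => y _.
by rewrite rmorphM /= conjCK mulrC.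
Qed.

Lemma kron_hermitian (I K : finType) (A : op C I) (B : op C K) :
  Defs.hermitian A -> Defs.hermitian B -> Defs.hermitian (kron A B).
Proof. by move=> herm_A herm_B i j; rewrite /kron rmorphM herm_A herm_B. Qed.

Lemma idop_hermitian (I : finType) : Defs.hermitian (@idop C I).
Proof. by move=> i j; rewrite /idop conjC_nat eq_sym. Qed.

Lemma projector_gram (K : finType) (P : op C K) :
  projector P -> P =2 gram (fun s r => P r s).
Proof.
move=> [herm_P idem_P] r r'; rewrite -{1}idem_P; apply: eq_bigr => s _.
by rewrite (herm_P s r').
Qed.

Lemma trace_kron_gram (I K Y S : finType) (rho : op C (I * K)%type)
    (Q : op C I) (P : op C K) (u : Y -> I -> C) (w : S -> K -> C) :
  Q =2 gram u -> P =2 gram w ->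
  optr (opmul (kron Q P) rho) =
  \sum_y \sum_s sesq rho (tensor (u y) (w s)) (tensor (u y) (w s)).
Proof.
move=> eqQ eqP; rewrite /optr /opmul /sesq exchange_big2 exchange_big.
apply: eq_bigr => k _; apply: eq_bigr => i _.
rewrite /kron eqQ eqP /gram big_distrlr big_distrl; apply: eq_bigr => y _ /=.
by rewrite big_distrl; apply: eq_bigr => s _; rewrite /tensor rmorphM /=; ring.
Qed.

Lemma trace_kron_gram_ge0 (I K Y S : finType) (rho : op C (I * K)%type)
    (Q : op C I) (P : op C K) (u : Y -> I -> C) (w : S -> K -> C) :
  psd rho -> Q =2 gram u -> P =2 gram w -> 0 <= optr (opmul (kron Q P) rho).
Proof.
move=> [_ rho_ge0] eqQ eqP; rewrite (trace_kron_gram _ eqQ eqP).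
by apply: sumr_ge0 => y _; apply: sumr_ge0 => s _; apply: rho_ge0.
Qed.

Lemma gram_tensor (I K A : finType) (Pi : op C I) (phi : A -> I -> C)
    (f : I -> C) (g : K -> C) :
  Pi =2 gram phi ->
  opapp (kron Pi (@idop C K)) (tensor f g) =1
  (fun z => \sum_a inner (phi a) f * tensor (phi a) g z).
Proof.
move=> eqPi z; rewrite /opapp sum_pairE.
under eq_bigr => i _ do under eq_bigr => k _ do
  rewrite /kron /idop /tensor /= [_ * (_ == _)%:R]mulrC -mulrA.
under eq_bigr => i _ do rewrite sum_deltal eqPi /gram !big_distrl /=.
rewrite exchange_big; apply: eq_bigr => a _ /=.
by rewrite /inner !big_distrl; apply: eq_bigr => i _; rewrite /tensor /=; ring.
Qed.

Lemma sesq_tensor_bound (I K A : finType) (rho : op C (I * K)%type) (Pi : op C I)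
    (phi : A -> I -> C) (f : I -> C) (g : K -> C) :
  psd rho -> Pi =2 gram phi -> opmul (kron Pi (@idop C K)) rho = rho ->
  sesq rho (tensor f g) (tensor f g) <=
  (\sum_a `|inner (phi a) f| ^+ 2) *
  \sum_a sesq rho (tensor (phi a) g) (tensor (phi a) g).
Proof.
move=> rho_psd eqPi fixed.
have herm_A : Defs.hermitian (kron Pi (@idop C K)).
  by apply: kron_hermitian; [exact: gram_hermitian eqPi | exact: idop_hermitian].
rewrite (sesq_fixed _ rho_psd.1 herm_A fixed) (sesq_ext _ (gram_tensor f g eqPi)).
exact: sesq_cauchy_schwarz.
Qed.

Lemma trace_gram_bound (I K A Y S : finType) (rho : op C (I * K)%type)
    (Pi Q : op C I) (P : op C K) (phi : A -> I -> C) (u : Y -> I -> C)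
    (w : S -> K -> C) :
  psd rho -> Pi =2 gram phi -> opmul (kron Pi (@idop C K)) rho = rho ->
  Q =2 gram u -> P =2 gram w ->
  optr (opmul (kron Q P) rho) <=
  (\sum_y \sum_a `|inner (phi a) (u y)| ^+ 2) * optr (opmul (kron Pi P) rho).
Proof.
move=> rho_psd eqPi fixed eqQ eqP.
rewrite (trace_kron_gram _ eqQ eqP) (trace_kron_gram _ eqPi eqP).
rewrite [X in _ * X]exchange_big big_distrlr /=; apply: ler_sum => y _; apply: ler_sum => s _.
exact: sesq_tensor_bound rho_psd eqPi fixed.
Qed.

Lemma trace_kron_sum (I K V : finType) (rho : op C (I * K)%type) (A : op C I)
    (P : V -> op C K) (B : op C K) :
  (forall k l, \sum_v P v k l = B k l) ->
  \sum_v optr (opmul (kron A (P v)) rho) = optr (opmul (kron A B) rho).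
Proof.
move=> sumP; rewrite exchange_big; apply: eq_bigr => i _.
rewrite exchange_big; apply: eq_bigr => j _.
by rewrite /kron -big_distrl -big_distrr /= sumP.
Qed.

Theorem guessing_probability_bound (I K A V Y : finType) (rho : op C (I * K)%type)
    (Pi : op C I) (phi : A -> I -> C) (Q : V -> op C I) (u : V -> Y -> I -> C)
    (P : V -> op C K) (c : C) :
  density rho -> Pi =2 gram phi -> opmul (kron Pi (@idop C K)) rho = rho ->
  complete_orth_projectors P -> (forall v, Q v =2 gram (u v)) ->
  (forall v, \sum_y \sum_a `|inner (phi a) (u v y)| ^+ 2 <= c) ->
  \sum_v optr (opmul (kron (Q v) (P v)) rho) <= c.
Proof.
move=> [rho_psd tr_rho] eqPi fixed [proj_P _ sum_P] eqQ overlap.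
have weights_sum1 : \sum_v optr (opmul (kron Pi (P v)) rho) = 1.
  by rewrite (trace_kron_sum _ _ sum_P) fixed tr_rho.
rewrite -[c]mulr1 -weights_sum1 mulr_sumr; apply: ler_sum => v _.
apply: le_trans (trace_gram_bound rho_psd eqPi fixed (eqQ v) (projector_gram (proj_P v))) _.
apply: ler_wpM2r (overlap v).
exact: trace_kron_gram_ge0 rho_psd eqPi (projector_gram (proj_P v)).
Qed.

End GramOperators.

Section Hadamard.
Variable C : numClosedFieldType.

Lemma sqrt2_conj : (sqrtC 2 : C)^* = sqrtC 2.
Proof. by apply: conj_Creal; apply: ger0_real; rewrite sqrtC_ge0 ler0n. Qed.

Lemma sign_conj (k : nat) : ((-1) ^+ k : C)^* = (-1) ^+ k.
Proof. by rewrite rmorphXn rmorphN1. Qed.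

Lemma norm_sqrt2_invX (m : nat) : `|(sqrtC 2 ^+ m)^-1 : C| ^+ 2 = (2 ^+ m)^-1.
Proof.
rewrite normfV normrX ger0_norm ?sqrtC_ge0 ?ler0n //.
by rewrite exprVn -exprM mulnC exprM sqrtCK.
Qed.

Lemma Htheta_conj (m : nat) (theta : bits m) (x y : bits m) :
  (Htheta C theta x y)^* = Htheta C theta y x.
Proof.
rewrite /Htheta rmorph_prod; apply: eq_bigr => i _.
case: (theta i) => /=; last by rewrite conjC_nat eq_sym.
by rewrite /hadamard rmorphM /= fmorphV /= sign_conj sqrt2_conj andbC.
Qed.

Lemma hadamard_norm2 (a b : bool) : `|hadamard C a b| ^+ 2 = (2 : C)^-1.
Proof.
by rewrite /hadamard normrM normr_sign mul1r -[sqrtC 2]expr1 norm_sqrt2_invX expr1.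
Qed.

Lemma Htheta_column_norm (m : nat) (theta : bits m) (v : bits m) :
  \sum_x `|Htheta C theta x v| ^+ 2 = 1.
Proof.
rewrite /Htheta; under eq_bigr => x _ do rewrite normr_prod -prodrXl.
rewrite -(bigA_distr_bigA (fun i b => `|if theta i then hadamard C b (v i)
                                        else (b == v i)%:R| ^+ 2)) /=.
apply: big1 => i _; rewrite big_bool /=.
case: (theta i) => /=.
  by rewrite !hadamard_norm2 [RHS](splitr 1) mul1r.
by case: (v i); rewrite /= normr0 normr1 expr0n expr1n ?addr0 ?add0r.
Qed.

End Hadamard.

Section BitStrings.
Variable m : nat.

Lemma xorb_bitsK (x a : bits m) : xorb_bits (xorb_bits x a) a = x.
Proof. by apply/ffunP => i; rewrite !ffunE; case: (x i); case: (a i). Qed.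

Lemma xorb_bits_inj (a : bits m) : injective (fun x : bits m => xorb_bits x a).
Proof. by apply: (can_inj (g := fun x => xorb_bits x a)) => x; rewrite xorb_bitsK. Qed.

Lemma eq_xorb_bits (x y a : bits m) : (y == xorb_bits x a) = (x == xorb_bits y a).
Proof. by apply/eqP/eqP => ->; rewrite xorb_bitsK. Qed.

Definition low_weight (t : nat) (ab : bits m * bits m) : bool :=
  (hw ab.1 <= t)%N && (hw ab.2 <= t)%N.

Lemma card_low_weight_pairs (t : nat) :
  (#|[pred ab | low_weight t ab]| <= m.+1 ^ (2 * t))%N.
Proof.
have -> : #|[pred ab | low_weight t ab]| =
          #|[predX [pred a : bits m | (hw a <= t)%N] & [pred a : bits m | (hw a <= t)%N]]|.
  by apply: eq_card => -[a b].
by rewrite cardX mul2n -addnn expnD leq_mul // card_low_weight.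
Qed.

End BitStrings.

Section EPRMeasurement.
Variables (C : numClosedFieldType) (m : nat).

Definition epr_low (t : nat) (ab : bits m * bits m) : (bits m * bits m)%type -> C :=
  if low_weight t ab then epr C ab.1 ab.2 else fun _ => 0.

Lemma PiEPR_gram (t : nat) : @PiEPR C m t =2 gram (epr_low t).
Proof.
move=> j k; rewrite /PiEPR /gram sum_pairE big_mkcond; apply: eq_bigr => a _.
rewrite /epr_low /low_weight /=; case: (hw a <= t)%N; last first.
  by rewrite big1 // => b _; rewrite mul0r.
rewrite big_mkcond; apply: eq_bigr => b _ /=.
by case: (hw b <= t)%N; rewrite //= mul0r.
Qed.

Variable theta : bits m.

Definition outcome_vec (v y : bits m) : (bits m * bits m)%type -> C :=
  tensor (fun x => Htheta C theta x v) (fun y' => (y' == y)%:R).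

Lemma Htheta_proj_entry (v x x' : bits m) :
  opmul (opmul (Htheta C theta) (basisproj C v)) (Htheta C theta) x x' =
  Htheta C theta x v * Htheta C theta v x'.
Proof.
rewrite /opmul /basisproj.
under eq_bigr => k _ do under eq_bigr => l _ do rewrite -mulnb natrM mulrA.
under eq_bigr => k _ do rewrite -big_distrl /= sum_deltar mulrAC.
by rewrite sum_deltar.
Qed.

Lemma measurement_gram (v : bits m) :
  kron (opmul (opmul (Htheta C theta) (basisproj C v)) (Htheta C theta))
       (@idop C (bits m)) =2 gram (outcome_vec v).
Proof.
move=> [x y] [x' y']; rewrite /kron Htheta_proj_entry /gram /outcome_vec /tensor /=.
under eq_bigr => y0 _ do rewrite rmorphM /= Htheta_conj conjC_nat.
rewrite (eq_bigr (fun y0 => (y == y0)%:R *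
                   (Htheta C theta x v * Htheta C theta v x' * (y' == y0)%:R))).
  by rewrite sum_deltal /idop eq_sym.
by move=> y0 _; ring.
Qed.

(* Overlap of an EPR vector with an outcome vector: only the term
   x = y xor a survives, with amplitude of modulus 2^{-m/2} |<x|H^theta|v>|. *)
Lemma epr_overlap (a b v y : bits m) :
  `|inner (epr C a b) (outcome_vec v y)| ^+ 2 =
  (2 ^+ m)^-1 * `|Htheta C theta (xorb_bits y a) v| ^+ 2.
Proof.
pose amp x : C := (sqrtC 2 ^+ m)^-1 * (-1) ^+ dotb b x.
have inner_eq : inner (epr C a b) (outcome_vec v y) =
                (amp (xorb_bits y a))^* * Htheta C theta (xorb_bits y a) v.
  rewrite /inner sum_pairE.
  transitivity (\sum_x \sum_y1 ((amp x)^* * Htheta C theta x v *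
                                (y1 == xorb_bits x a)%:R) * (y1 == y)%:R).
    apply: eq_bigr => x _; apply: eq_bigr => y1 _.
    by rewrite /epr /outcome_vec /tensor /= !rmorphM /= conjC_nat; ring.
  under eq_bigr => x _ do rewrite sum_deltar eq_xorb_bits.
  by rewrite sum_deltar.
by rewrite inner_eq normrM norm_conjC normrM normr_sign mulr1 exprMn norm_sqrt2_invX.
Qed.

(* Each low-weight EPR vector has total squared overlap 2^-m with the outcome
   vectors of any fixed v, since the column H^theta|v> is a unit vector. *)
Lemma total_overlap (t : nat) (v : bits m) :
  \sum_y \sum_ab `|inner (epr_low t ab) (outcome_vec v y)| ^+ 2 =
  (2 ^+ m)^-1 * #|[pred ab : bits m * bits m | low_weight t ab]|%:R.
Proof.
rewrite exchange_big (eq_bigr (fun ab => if low_weight t ab then (2 ^+ m)^-1 else 0)).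
  by rewrite -big_mkcond sumr_const mulr_natr.
move=> ab _; rewrite /epr_low; case: (low_weight t ab); last first.
  rewrite big1 // => y _; rewrite /inner big1 ?normr0 ?expr0n // => z _.
  by rewrite conjC0 mul0r.
under eq_bigr => y _ do rewrite epr_overlap.
rewrite -mulr_sumr (reindex_inj (@xorb_bits_inj m ab.1)) /=.
under eq_bigr => x _ do rewrite xorb_bitsK.
by rewrite Htheta_column_norm mulr1.
Qed.

End EPRMeasurement.

Theorem mainTheorem12 (C : numClosedFieldType) (m t : nat) (theta : bits m)
  (TR : finType) (rho : op C ((bits m * bits m) * TR)%type)
  (P : bits m -> op C TR) :
  density rho ->
  opmul (kron (@PiEPR C m t) (@idop C TR)) rho = rho ->
  complete_orth_projectors P ->
  \sum_(v : bits m)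
     optr (opmul (kron (kron (opmul (opmul (Htheta C theta) (basisproj C v))
                                        (Htheta C theta))
                             (@idop C (bits m)))
                       (P v)) rho)
  <= (2 ^+ m)^-1 * (m.+1)%:R ^+ (2 * t).
Proof.
move=> rho_density supp_EPR P_complete.
have overlap v : \sum_y \sum_ab `|inner (epr_low C t ab) (outcome_vec C theta v y)| ^+ 2
                 <= (2 ^+ m)^-1 * #|[pred ab : bits m * bits m | low_weight t ab]|%:R.
  by rewrite total_overlap.
apply: le_trans (guessing_probability_bound rho_density (@PiEPR_gram C m t) supp_EPR
                   P_complete (measurement_gram C theta) overlap) _.
rewrite ler_wpM2l ?invr_ge0 ?exprn_ge0 ?ler0n // -natrX ler_nat.
exact: card_low_weight_pairs.
Qed.
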